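(* Let $M$ be a compact complex manifold of complex dimension $n$. For all $p,q$ with $0\le p,q\le n$: (1) $b^{p,q}=\tilde b^{p,q}+a^{p,q}$, $d^{p,q}=\tilde d^{p,q}+a^{p,q}$, $c^{p,q}=\tilde c^{p,q}+f^{p,q}$, $e^{p,q}=\tilde e^{p,q}+f^{p,q}$; (2) $b^{p,q}\le h^{p,q}_{\partial\bar\partial}$, $d^{p,q}\le h^{p,q}_{\partial\bar\partial}$, $c^{p,q}\le h^{p,q}_{\partial+\bar\partial}$, $e^{p,q}\le h^{p,q}_{\partial+\bar\partial}$; (3) $h^{p,q}_{\partial+\bar\partial}+\tilde b^{p,q}=h^{p,q}_{\bar\partial}+c^{p,q}$, $h^{p,q}_{\partial+\bar\partial}+\tilde d^{p,q}=h^{p,q}_{\partial}+e^{p,q}$, $h^{p,q}_{\partial\bar\partial}+\tilde e^{p,q}=h^{p,q}_{\bar\partial}+d^{p,q}$, $h^{p,q}_{\partial\bar\partial}+\tilde c^{p,q}=h^{p,q}_{\partial}+b^{p,q}$; (4) $h^{p,q}_{\partial+\bar\partial}+h^{p,q}_{\partial\bar\partial}=h^{p,q}_{\partial}+h^{p,q}_{\bar\partial}+a^{p,q}+f^{p,q}$; (5) $h^{0,q}_{\bar\partial}\le h^{0,q}_{\partial+\bar\partial}$, $h^{0,q}_{\partial\bar\partial}\le h^{0,q}_{\partial}$, $h^{p,0}_{\partial\bar\partial}\le h^{p,0}_{\bar\partial}$, $h^{p,0}_{\partial}\le h^{p,0}_{\partial+\bar\partial}$; (6) $h^{p,n}_{\partial}\le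 h^{p,n}_{\partial\bar\partial}$, $h^{p,n}_{\partial+\bar\partial}\le h^{p,n}_{\bar\partial}$, $h^{n,q}_{\bar\partial}\le h^{n,q}_{\partial\bar\partial}$, $h^{n,q}_{\partial+\bar\partial}\le h^{n,q}_{\partial}$.
   Context: Let $M$ be a compact complex manifold of complex dimension $n$ and $\mathcal{E}^{p,q}(M)$ the space of smooth complex $(p,q)$-forms. In bidegree $(p,q)$, $\ker\partial,\ker\bar\partial,\ker\partial\bar\partial$ denote the kernels of $\partial,\bar\partial,\partial\bar\partial$ on $\mathcal{E}^{p,q}(M)$, and $\mathrm{Im}\,\partial=\partial\mathcal{E}^{p-1,q}(M)$, $\mathrm{Im}\,\bar\partial=\bar\partial\mathcal{E}^{p,q-1}(M)$, $\mathrm{Im}\,\partial\bar\partial=\partial\bar\partial\mathcal{E}^{p-1,q-1}(M)$ (zero if an index is negative). Define, all in bidegree $(p,q)$: $H^{p,q}_{\bar\partial}=\ker\bar\partial/\mathrm{Im}\,\bar\partial$, $H^{p,q}_{\partial}=\ker\partial/\mathrm{Im}\,\partial$, $H^{p,q}_{\partial\bar\partial}=(\ker\partial\cap\ker\bar\partial)/\mathrm{Im}\,\partial\bar\partial$ (Bott–Chern), $H^{p,q}_{\partial+\bar\partial}=\ker\partial\bar\partial/(\mathrm{Im}\,\partial+\mathrm{Im}\,\bar\partial)$ (Aeppli), and $A^{p,q}=(\mathrm{Im}\,\partial\cap\mathrm{Im}\,\bar\partial)/\mathrm{Im}\,\partial\bar\partial$, $B^{p,q}=(\mathrm{Im}\,\partial\cap\ker\bar\partial)/\mathrm{Im}\,\partial\bar\partial$,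 $C^{p,q}=\ker\partial\bar\partial/(\mathrm{Im}\,\partial+\ker\bar\partial)$, $D^{p,q}=(\ker\partial\cap\mathrm{Im}\,\bar\partial)/\mathrm{Im}\,\partial\bar\partial$, $E^{p,q}=\ker\partial\bar\partial/(\ker\partial+\mathrm{Im}\,\bar\partial)$, $F^{p,q}=\ker\partial\bar\partial/(\ker\partial+\ker\bar\partial)$, $\tilde B^{p,q}=(\mathrm{Im}\,\partial\cap\ker\bar\partial)/(\mathrm{Im}\,\partial\cap\mathrm{Im}\,\bar\partial)$, $\tilde D^{p,q}=(\ker\partial\cap\mathrm{Im}\,\bar\partial)/(\mathrm{Im}\,\partial\cap\mathrm{Im}\,\bar\partial)$, $\tilde C^{p,q}=(\ker\partial+\ker\bar\partial)/(\mathrm{Im}\,\partial+\ker\bar\partial)$, $\tilde E^{p,q}=(\ker\partial+\ker\bar\partial)/(\ker\partial+\mathrm{Im}\,\bar\partial)$. All are finite-dimensional; lowercase letters denote complex dimensions, e.g. $a^{p,q}=\dim A^{p,q}$, $\tilde b^{p,q}=\dim\tilde B^{p,q}$, $h^{p,q}_{\partial+\bar\partial}=\dim H^{p,q}_{\partial+\bar\partial}$. *)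

(* Abstract double complex model of (E^{*,*}(M), ∂, ∂̄) *)
From HB Require Import structures.
From mathcomp Require Import all_boot all_order all_algebra.
From Stdlib Require Import ClassicalEpsilon.
Set Implicit Arguments. Unset Strict Implicit. Unset Printing Implicit Defensive.
Import GRing.Theory.
Local Open Scope ring_scope.

Record dcomplex (R : fieldType) (n : nat) := DComplex {
  form : nat -> nat -> lmodType R;
  del : forall p q, {linear form p q -> form p.+1 q};
  dbar : forall p q, {linear form p q -> form p q.+1};
  del_del : forall p q (x : form p q), del p.+1 q (del p q x) = 0;
  dbar_dbar : forall p q (x : form p q), dbar p q.+1 (dbar p q x) = 0;
  del_dbar : forall p q (x : form p q),
      del p q.+1 (dbar p q x) = - dbar p.+1 q (del p q x);
  form_bounded : forall p q (x : form p q), (n < p)%N \/ (n < q)%N -> x = 0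
}.

Section Spaces.
Variables (R : fieldType) (n : nat) (C : dcomplex R n).

Definition kerD p q : form C p q -> Prop := fun x => del C p q x = 0.
Definition kerDb p q : form C p q -> Prop := fun x => dbar C p q x = 0.
Definition kerDDb p q : form C p q -> Prop :=
  fun x => del C p q.+1 (dbar C p q x) = 0.

(* images; zero when an index would be negative *)
Definition imD p q : form C p q -> Prop :=
  match p as p0 return form C p0 q -> Prop with
  | 0 => fun x => x = 0
  | p'.+1 => fun x => exists y : form C p' q, del C p' q y = x
  end.
Definition imDb p q : form C p q -> Prop :=
  match q as q0 return form C p q0 -> Prop with
  | 0 => fun x => x = 0
  | q'.+1 => fun x => exists y : form C p q', dbar C p q' y = x
  end.
Definition imDDb p q : form C p q -> Prop :=
  match p as p0 return form C p0 q -> Prop with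
  | 0 => fun x => x = 0
  | p'.+1 =>
    match q as q0 return form C p'.+1 q0 -> Prop with
    | 0 => fun x => x = 0
    | q'.+1 => fun x => exists y : form C p' q',
                 del C p' q'.+1 (dbar C p' q' y) = x
    end
  end.
End Spaces.
Arguments kerD {R n} C p q _.
Arguments kerDb {R n} C p q _.
Arguments kerDDb {R n} C p q _.
Arguments imD {R n} C p q _.
Arguments imDb {R n} C p q _.
Arguments imDDb {R n} C p q _.

Definition capP (V : Type) (P Q : V -> Prop) : V -> Prop := fun x => P x /\ Q x.
Definition addP (V : zmodType) (P Q : V -> Prop) : V -> Prop :=
  fun x => exists y z, P y /\ Q z /\ x = y + z.

(* dimq S T d : T ⊆ S and the quotient S/T has dimension d, i.e. there are
   d vectors of S whose classes form a basis of S/T. *)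
Definition dimq (R : fieldType) (V : lmodType R) (S T : V -> Prop) (d : nat) :=
  (forall x, T x -> S x) /\
  exists v : 'I_d -> V,
    (forall i, S (v i)) /\
    (forall c : 'I_d -> R, T (\sum_(i < d) c i *: v i) -> forall i, c i = 0) /\
    (forall x, S x -> exists c : 'I_d -> R, T (x - \sum_(i < d) c i *: v i)).

Definition findim (R : fieldType) (V : lmodType R) (S T : V -> Prop) :=
  exists d, dimq S T d.

(* the dimension of S/T (meaningful when it is finite-dimensional) *)
Definition qdim (R : fieldType) (V : lmodType R) (S T : V -> Prop) : nat :=
  epsilon (inhabits 0%N) (dimq S T).

Section Cohomologies.
Variables (R : fieldType) (n : nat) (C : dcomplex R n) (p q : nat).
Let kD := kerD C p q. Let kDb := kerDb C p q. Let kDDb := kerDDb C p q.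
Let iD := imD C p q. Let iDb := imDb C p q. Let iDDb := imDDb C p q.

(* numerator / denominator of each space *)
Definition sp_Hdb := (kDb, iDb).
Definition sp_Hd := (kD, iD).
Definition sp_HBC := (capP kD kDb, iDDb).
Definition sp_HA := (kDDb, addP iD iDb).
Definition sp_A := (capP iD iDb, iDDb).
Definition sp_B := (capP iD kDb, iDDb).
Definition sp_C := (kDDb, addP iD kDb).
Definition sp_D := (capP kD iDb, iDDb).
Definition sp_E := (kDDb, addP kD iDb).
Definition sp_F := (kDDb, addP kD kDb).
Definition sp_Bt := (capP iD kDb, capP iD iDb).
Definition sp_Dt := (capP kD iDb, capP iD iDb).
Definition sp_Ct := (addP kD kDb, addP iD kDb).
Definition sp_Et := (addP kD kDb, addP kD iDb).
End Cohomologies.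

Definition sdim (R : fieldType) (V : lmodType R) (s : (V -> Prop) * (V -> Prop)) :=
  qdim s.1 s.2.
Definition sfin (R : fieldType) (V : lmodType R) (s : (V -> Prop) * (V -> Prop)) :=
  findim s.1 s.2.

Definition h_dbar R n (C : dcomplex R n) p q := sdim (sp_Hdb C p q).
Definition h_del R n (C : dcomplex R n) p q := sdim (sp_Hd C p q).
Definition h_BC R n (C : dcomplex R n) p q := sdim (sp_HBC C p q).
Definition h_A R n (C : dcomplex R n) p q := sdim (sp_HA C p q).
Definition dim_a R n (C : dcomplex R n) p q := sdim (sp_A C p q).
Definition dim_b R n (C : dcomplex R n) p q := sdim (sp_B C p q).
Definition dim_c R n (C : dcomplex R n) p q := sdim (sp_C C p q).
Definition dim_d R n (C : dcomplex R n) p q := sdim (sp_D C p q).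
Definition dim_e R n (C : dcomplex R n) p q := sdim (sp_E C p q).
Definition dim_f R n (C : dcomplex R n) p q := sdim (sp_F C p q).
Definition dim_bt R n (C : dcomplex R n) p q := sdim (sp_Bt C p q).
Definition dim_dt R n (C : dcomplex R n) p q := sdim (sp_Dt C p q).
Definition dim_ct R n (C : dcomplex R n) p q := sdim (sp_Ct C p q).
Definition dim_et R n (C : dcomplex R n) p q := sdim (sp_Et C p q).

Definition all_finite R n (C : dcomplex R n) : Prop :=
  forall p q,
    sfin (sp_Hdb C p q) /\ sfin (sp_Hd C p q) /\ sfin (sp_HBC C p q) /\
    sfin (sp_HA C p q) /\ sfin (sp_A C p q) /\ sfin (sp_B C p q) /\
    sfin (sp_C C p q) /\ sfin (sp_D C p q) /\ sfin (sp_E C p q) /\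
    sfin (sp_F C p q) /\ sfin (sp_Bt C p q) /\ sfin (sp_Dt C p q) /\
    sfin (sp_Ct C p q) /\ sfin (sp_Et C p q).

(* All spaces are subquotients of the space of (p,q)-forms, and dimensions of subquotients
   behave as for finite-dimensional spaces: they add up along towers [U ⊇ S ⊇ T], and for
   [I ⊆ K] the modular law splits [dim K/I] as [dim (W+K)/(W+I) + dim (W∩K)/(W∩I)].
   Finiteness of the four cohomologies makes every subquotient met below finite-dimensional.
   (1) and (2) are towers among the spaces built from the kernels and images of ∂, ∂̄ and
   ∂∂̄.  Each identity of (3) is the modular law for [H_∂̄ = ker ∂̄/im ∂̄] or
   [H_∂ = ker ∂/im ∂], with [W] one of [im ∂], [ker ∂], [im ∂̄], [ker ∂̄], glued to the tower
   [ker ∂∂̄ ⊇ W+K ⊇ W+I] or [ker ∂ ∩ ker ∂̄ ⊇ W∩I ⊇ im ∂∂̄].  (4) is the sum of two identities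
   of (3), simplified with (1).  (5) and (6) are (3) and (1) at the border: [B] vanishes for
   [p = 0] and [D] for [q = 0] (no [im ∂], resp. [im ∂̄]), while [C] vanishes for [q = n] and
   [E] for [p = n] (where every form is ∂̄-, resp. ∂-closed). *)

From mathcomp Require Import all_boot all_order all_algebra.
From mathcomp Require Import zify.
From Stdlib Require Import Classical ClassicalEpsilon FunctionalExtensionality PropExtensionality.
Import GRing.Theory.

Section Concatenation.
Set Implicit Arguments.
Variable X : Type.

Definition catf m k (a : 'I_m -> X) (b : 'I_k -> X) (i : 'I_(m + k)) : X :=
  match split i with inl j => a j | inr j => b j end.

Lemma catf_lshift m k (a : 'I_m -> X) (b : 'I_k -> X) j : catf a b (lshift k j) = a j.
Proof. by rewrite /catf (unsplitK (inl j)). Qed.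

Lemma catf_rshift m k (a : 'I_m -> X) (b : 'I_k -> X) j : catf a b (rshift m j) = b j.
Proof. by rewrite /catf (unsplitK (inr j)). Qed.

End Concatenation.

Lemma ex_last_of_bounded {P : nat -> Prop} {N : nat} :
  P 0 -> (forall k, P k -> k <= N) -> exists k, P k /\ ~ P k.+1.
Proof.
move=> P0 boundedP; apply: NNPP => noLast.
have PS k : P k -> P k.+1 by move=> Pk; apply: NNPP => nPk1; apply: noLast; exists k.
have : P N.+1 by elim: N.+1 => // k; exact: PS.
by move/boundedP; rewrite ltnn.
Qed.

Section QuotientDimension.
Set Implicit Arguments.
Unset Strict Implicit.
Local Open Scope ring_scope.
Variables (R : fieldType) (V : lmodType R).
Implicit Types (S T U W Z K I : V -> Prop) (x y : V).

Definition subspace S := S 0 /\ forall a x y, S x -> S y -> S (a *: x + y).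

(* Up to conversion, [dimq S T d] says that [T ⊆ S] and that some family [v] in [S]
   satisfies [free_mod T v] and [span_mod S T v]. *)
Definition lcomb d (c : 'I_d -> R) (v : 'I_d -> V) := \sum_(i < d) c i *: v i.
Definition free_mod T d (v : 'I_d -> V) := forall c, T (lcomb c v) -> forall i, c i = 0.
Definition span_mod S T d (v : 'I_d -> V) := forall x, S x -> exists c, T (x - lcomb c v).

Lemma subspace0 S : subspace S -> S 0. Proof. by case. Qed.

Lemma subspaceD S x y : subspace S -> S x -> S y -> S (x + y).
Proof. by case=> _ sS Sx Sy; have := sS 1 x y Sx Sy; rewrite scale1r. Qed.

Lemma subspaceZ S a x : subspace S -> S x -> S (a *: x).
Proof. by case=> S0 sS Sx; have := sS a x 0 Sx S0; rewrite addr0. Qed.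

Lemma subspaceB S x y : subspace S -> S x -> S y -> S (x - y).
Proof. by move=> sS Sx Sy; rewrite -scaleN1r; apply: subspaceD => //; apply: subspaceZ. Qed.

Lemma subspace_zero : subspace (fun x => x = 0).
Proof. by split=> // a x y -> ->; rewrite scaler0 addr0. Qed.

Lemma subspace_lcomb S d (c : 'I_d -> R) v : subspace S -> (forall i, S (v i)) -> S (lcomb c v).
Proof.
move=> sS Sv; rewrite /lcomb; elim/big_rec: _ => [|i x _ Sx]; first exact: subspace0.
by apply: subspaceD => //; apply: subspaceZ.
Qed.

Lemma lcomb_cat m k (c : 'I_(m + k) -> R) (a : 'I_m -> V) (b : 'I_k -> V) :
  lcomb c (catf a b) =
  lcomb (fun j => c (lshift k j)) a + lcomb (fun j => c (rshift m j)) b.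
Proof.
by rewrite /lcomb big_split_ord; congr (_ + _); apply: eq_bigr => j _;
  rewrite ?catf_lshift ?catf_rshift.
Qed.

Lemma lcomb_catf m k (ca : 'I_m -> R) (cb : 'I_k -> R) (a : 'I_m -> V) (b : 'I_k -> V) :
  lcomb (catf ca cb) (catf a b) = lcomb ca a + lcomb cb b.
Proof.
by rewrite lcomb_cat; congr (_ + _); apply: eq_bigr => j _;
  rewrite ?catf_lshift ?catf_rshift.
Qed.

Lemma lcombBr d (c : 'I_d -> R) (u v : 'I_d -> V) :
  lcomb c u - lcomb c v = lcomb c (fun i => u i - v i).
Proof. by rewrite /lcomb -sumrB; apply: eq_bigr => i _; rewrite scalerBr. Qed.

(* Steinitz: if [d < m], a nonzero row [c] in the kernel of the coefficient matrix of the
   [w j] on the [v i] gives a combination of the [w j] lying in [T]. *)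
Lemma free_mod_leq_span S T m d (w : 'I_m -> V) (v : 'I_d -> V) :
  subspace T -> (forall j, S (w j)) -> free_mod T w -> span_mod S T v -> (m <= d)%N.
Proof.
move=> sT Sw freew spanv.
have [f Twf] := fin_all_exists (fun j => spanv _ (Sw j)).
pose A : 'M[R]_(m, d) := \matrix_(j, i) f j i.
rewrite leqNgt; apply/negP => ltdm.
have : (0 < \rank (kermx A))%N.
  by rewrite mxrank_ker subn_gt0 (leq_ltn_trans (rank_leq_col A)).
suff -> : kermx A = 0 by rewrite mxrank0.
apply/row_matrixP => k; rewrite row0; set c := row k (kermx A).
have cA : c *m A = 0 by rewrite -row_mul mulmx_ker row0.
have fv0 : \sum_(j < m) c 0 j *: lcomb (f j) v = 0.
  transitivity (\sum_(i < d) (c *m A) 0 i *: v i).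
    symmetry; under eq_bigr do rewrite mxE scaler_suml.
    rewrite exchange_big; apply: eq_bigr => j _.
    rewrite /lcomb scaler_sumr; apply: eq_bigr => i _.
    by rewrite !mxE scalerA.
  by rewrite cA; apply: big1 => i _; rewrite mxE scale0r.
have Tcw : T (lcomb (c 0) w).
  have -> : lcomb (c 0) w = \sum_(j < m) c 0 j *: (w j - lcomb (f j) v)
                            + \sum_(j < m) c 0 j *: lcomb (f j) v.
    by rewrite -big_split /=; apply: eq_bigr => j _; rewrite -scalerDr subrK.
  by rewrite fv0 addr0; apply: subspace_lcomb.
by apply/rowP => j; rewrite [RHS]mxE; exact: freew Tcw j.
Qed.

Lemma dimq_unique S T d d' : subspace T -> dimq S T d -> dimq S T d' -> d = d'.
Proof.
move=> sT [_ [v [Sv [freev spanv]]]] [_ [w [Sw [freew spanw]]]].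
apply/eqP; rewrite eqn_leq.
by rewrite (free_mod_leq_span sT Sv freev spanw) (free_mod_leq_span sT Sw freew spanv).
Qed.

Lemma qdim_dimq S T d : subspace T -> dimq S T d -> qdim S T = d.
Proof.
move=> sT dST; apply: (dimq_unique sT _ dST).
by rewrite /qdim; apply: (epsilon_spec (inhabits 0%N) (dimq S T)); exists d.
Qed.

Lemma free_mod_extend T k (w : 'I_k -> V) x : subspace T -> free_mod T w ->
  ~ (exists c, T (x - lcomb c w)) -> free_mod T (catf w (fun _ : 'I_1 => x)).
Proof.
move=> sT freew xNspan c; rewrite lcomb_cat {2}/lcomb big_ord1 => Tc.
set a := c (rshift k ord0) in Tc.
have a0 : a = 0.
  apply: NNPP => /eqP a_neq0; apply: xNspan.
  exists (fun j => - a^-1 * c (lshift 1 j)).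
  suff -> : x - lcomb (fun j => - a^-1 * c (lshift 1 j)) w
          = a^-1 *: (lcomb (fun j => c (lshift 1 j)) w + a *: x) by exact: subspaceZ.
  rewrite scalerDr scalerA mulVf // scale1r addrC; congr (_ + _).
  rewrite /lcomb scaler_sumr -sumrN; apply: eq_bigr => j _.
  by rewrite scalerA mulNr scaleNr opprK.
move: Tc; rewrite a0 scale0r addr0 => /freew cw0.
by move=> i; case: (split_ordP i) => j ->; [exact: cw0 | rewrite (ord1 j); exact: a0].
Qed.

(* A free family in [S] modulo [T] that cannot be extended exists, since free families are
   no longer than [v]; it is a basis of [S/T]. *)
Lemma findim_span S T N (v : 'I_N -> V) :
  subspace T -> (forall x, T x -> S x) -> span_mod S T v -> findim S T.
Proof.
move=> sT TS spanv.
pose P k := exists w : 'I_k -> V, (forall i, S (w i)) /\ free_mod T w.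
have P0 : P 0%N by exists (fun _ => 0); split=> [[] | c _ []].
have boundedP k : P k -> (k <= N)%N.
  by case=> w [Sw freew]; exact: free_mod_leq_span sT Sw freew spanv.
have [k [[w [Sw freew]] NPk1]] := ex_last_of_bounded P0 boundedP.
exists k; split=> //; exists w; split=> //; split=> // x Sx.
apply: NNPP => xNspan; apply: NPk1; rewrite -addn1.
exists (catf w (fun _ : 'I_1 => x)); split; last exact: free_mod_extend.
by move=> i; rewrite /catf; case: split.
Qed.

Lemma dimq_tower U S T m k :
  subspace S -> dimq U S m -> dimq S T k -> dimq U T (m + k).
Proof.
move=> sS [SU [a [Ua [freea spana]]]] [TS [b [Sb [freeb spanb]]]].
split=> [x /TS /SU // |]; exists (catf a b); split.
  by move=> i; rewrite /catf; case: split => j; [exact: Ua | exact/SU/Sb].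
split=> [c | x /spana [ca /spanb [cb Tx]]]; last first.
  by exists (catf ca cb); rewrite -/(lcomb _ _) lcomb_catf opprD addrA.
rewrite -/(lcomb _ _) lcomb_cat => Tc.
have ca0 : forall j, c (lshift k j) = 0.
  apply: freea; rewrite -[X in S X](addrK (lcomb (fun j => c (rshift m j)) b)).
  by apply: subspaceB => //; [exact: TS | exact: subspace_lcomb].
have cb0 : forall j, c (rshift m j) = 0.
  by apply: freeb; move: Tc; rewrite {1}/lcomb big1 ?add0r // => j _; rewrite ca0 scale0r.
by move=> i; case: (split_ordP i) => j ->; [exact: ca0 | exact: cb0].
Qed.

Lemma findim_tower U S T : subspace S -> subspace T ->
  (forall x, T x -> S x) -> (forall x, S x -> U x) ->
  findim U T -> findim U S /\ findim S T.
Proof.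
move=> sS sT TS SU [N [_ [u [_ [_ spanu]]]]]; split.
  by apply: (findim_span (v := u)) => // x /spanu [c /TS Sx]; exists c.
by apply: (findim_span (v := u)) => // x /SU /spanu.
Qed.

Lemma qdim_tower U S T : subspace S -> subspace T ->
  (forall x, T x -> S x) -> (forall x, S x -> U x) ->
  findim U T -> qdim U T = (qdim U S + qdim S T)%N.
Proof.
move=> sS sT TS SU finUT.
have [[m dUS] [k dST]] := findim_tower sS sT TS SU finUT.
by rewrite (qdim_dimq sS dUS) (qdim_dimq sT dST) (qdim_dimq sT (dimq_tower sS dUS dST)).
Qed.

Lemma leq_qdim_sub U S T : subspace S -> subspace T ->
  (forall x, T x -> S x) -> (forall x, S x -> U x) ->
  findim U T -> (qdim S T <= qdim U T)%N.
Proof. by move=> sS sT TS SU finUT; rewrite (qdim_tower sS sT TS SU finUT) leq_addl. Qed.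

Lemma leq_qdim_quo U S T : subspace S -> subspace T ->
  (forall x, T x -> S x) -> (forall x, S x -> U x) ->
  findim U T -> (qdim U S <= qdim U T)%N.
Proof. by move=> sS sT TS SU finUT; rewrite (qdim_tower sS sT TS SU finUT) leq_addr. Qed.

Lemma dimq_transfer S T S' T' d : subspace S -> subspace T' ->
  (forall x, S x -> S' x) -> (forall x, T' x -> S' x) ->
  (forall x, S x -> T x <-> T' x) -> (forall x, S' x -> addP S T' x) ->
  dimq S T d -> dimq S' T' d.
Proof.
move=> sS sT' SS' T'S' TT' S'ST' [_ [v [Sv [freev spanv]]]].
split=> //; exists v; split=> [i|]; first exact/SS'/Sv.
split=> [c Tc | _ /S'ST' [x [z [Sx [T'z ->]]]]].
  exact: freev ((TT' _ (subspace_lcomb c sS Sv)).2 Tc).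
have [c Tx] := spanv x Sx; exists c.
rewrite addrAC; apply: subspaceD => //.
exact: (TT' _ (subspaceB sS Sx (subspace_lcomb c sS Sv))).1 Tx.
Qed.

Lemma findim_transfer S T S' T' : subspace S -> subspace T -> subspace T' ->
  (forall x, T x -> S x) -> (forall x, S x -> S' x) ->
  (forall x, S x -> T x <-> T' x) -> (forall x, S' x -> addP S T' x) ->
  findim S' T' -> findim S T.
Proof.
move=> sS sT sT' TS SS' TT' S'ST' [d [_ [u [S'u [_ spanu]]]]].
have [s us] := fin_all_exists (fun i => S'ST' _ (S'u i)).
have Ss i : S (s i) by have [z [Ssi _]] := us i.
have T'us i : T' (u i - s i).
  by have [z [_ [T'z ->]]] := us i; rewrite addrAC subrr add0r.
apply: (findim_span (v := s)) => // x Sx.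
have [c T'x] := spanu x (SS' _ Sx); exists c.
apply/(TT' _ (subspaceB sS Sx (subspace_lcomb c sS Ss))).
have -> : x - lcomb c s = (x - lcomb c u) + lcomb c (fun i => u i - s i).
  by rewrite -lcombBr addrA subrK.
by apply: subspaceD => //; apply: subspace_lcomb.
Qed.

Lemma qdim_transfer S T S' T' : subspace S -> subspace T -> subspace T' ->
  (forall x, S x -> S' x) -> (forall x, T' x -> S' x) ->
  (forall x, S x -> T x <-> T' x) -> (forall x, S' x -> addP S T' x) ->
  findim S T -> qdim S' T' = qdim S T.
Proof.
move=> sS sT sT' SS' T'S' TT' S'ST' [d dST].
by rewrite (qdim_dimq sT dST) (qdim_dimq sT' (dimq_transfer sS sT' SS' T'S' TT' S'ST' dST)).
Qed.

Lemma qdim_eq0 S T : subspace T ->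
  (forall x, T x -> S x) -> (forall x, S x -> T x) -> qdim S T = 0%N.
Proof.
move=> sT TS ST; apply: qdim_dimq => //; split=> //; exists (fun _ => 0).
split=> [[] //|]; split=> [c _ [] // | x /ST Tx].
by exists (fun _ => 0); rewrite big_ord0 subr0.
Qed.

Lemma capP_subspace S T : subspace S -> subspace T -> subspace (capP S T).
Proof.
move=> [S0 sS] [T0 sT]; split=> [// | a x y [Sx Tx] [Sy Ty]].
by split; [apply: sS | apply: sT].
Qed.

Lemma addP_l S T x : subspace T -> S x -> addP S T x.
Proof. by move=> sT Sx; exists x, 0; rewrite addr0; split=> //; split=> //; apply: subspace0. Qed.

Lemma addP_r S T x : subspace S -> T x -> addP S T x.
Proof. by move=> sS Tx; exists 0, x; rewrite add0r; split=> //; apply: subspace0. Qed.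

Lemma addP_subspace S T : subspace S -> subspace T -> subspace (addP S T).
Proof.
move=> sS sT; split; first exact: addP_l sT (subspace0 sS).
move=> a _ _ [x1 [x2 [Sx1 [Tx2 ->]]]] [y1 [y2 [Sy1 [Ty2 ->]]]].
exists (a *: x1 + y1), (a *: x2 + y2); rewrite scalerDr addrACA.
by split; [case: sS => _; apply | split=> //; case: sT => _; apply].
Qed.

Lemma capPC S T : capP S T = capP T S.
Proof.
by apply: functional_extensionality => x; apply: propositional_extensionality; rewrite /capP; tauto.
Qed.

Lemma addPC S T : addP S T = addP T S.
Proof.
apply: functional_extensionality => x; apply: propositional_extensionality.
by split=> -[y [z [Sy [Tz ->]]]]; exists z, y; rewrite addrC.
Qed.

Lemma addP_sub S T U : subspace U ->
  (forall x, S x -> U x) -> (forall x, T x -> U x) -> forall x, addP S T x -> U x.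
Proof. by move=> sU SU TU _ [y [z [Sy [Tz ->]]]]; apply: subspaceD; auto. Qed.

Lemma addP_mono S T S' T' : (forall x, S x -> S' x) -> (forall x, T x -> T' x) ->
  forall x, addP S T x -> addP S' T' x.
Proof. by move=> SS' TT' _ [y [z [Sy [Tz ->]]]]; exists y, z; auto. Qed.

Lemma capP_mono S T S' T' : (forall x, S x -> S' x) -> (forall x, T x -> T' x) ->
  forall x, capP S T x -> capP S' T' x.
Proof. by move=> SS' TT' x [Sx Tx]; split; auto. Qed.

(* The modular law: [K/I] is filtered by [I + (W ∩ K)], whose two layers are
   [(W + K)/(W + I)] and [(W ∩ K)/(W ∩ I)]. *)
Lemma qdim_modular W K I : subspace W -> subspace K -> subspace I ->
  (forall x, I x -> K x) -> findim K I ->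
  qdim K I = (qdim (addP W K) (addP W I) + qdim (capP W K) (capP W I))%N.
Proof.
move=> sW sK sI IK finKI.
have sWK := capP_subspace sW sK; have sWI := capP_subspace sW sI.
have sWpI := addP_subspace sW sI.
set J := addP I (capP W K).
have sJ : subspace J := addP_subspace sI sWK.
have IJ x : I x -> J x by exact: addP_l.
have JK : forall x, J x -> K x by apply: addP_sub => // x [].
have [finKJ finJI] := findim_tower sJ sI IJ JK finKI.
rewrite (qdim_tower sJ sI IJ JK finKI); congr (_ + _)%N.
  symmetry; apply: qdim_transfer finKJ => //.
  - by move=> x; apply: addP_r.
  - exact: addP_mono.
  - move=> x Kx; split=> [[i [y [Ii [[Wy _] ->]]]] | [y [i [Wy [Ii Ex]]]]].
      by exists y, i; rewrite addrC.
    have Ky : K y by have := subspaceB sK Kx (IK _ Ii); rewrite Ex addrK.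
    by exists i, y; rewrite addrC.
  - by move=> _ [y [k [Wy [Kk ->]]]]; exists k, y; rewrite addrC; split=> //; split=> //; exact: addP_l.
have capWKWI : forall x, capP W K x -> capP W I x <-> I x.
  by move=> x [Wx _]; split=> [[]|] //.
have JWKI : forall x, J x -> addP (capP W K) I x.
  by move=> _ [i [y [Ii [WKy ->]]]]; exists y, i; rewrite addrC.
apply: qdim_transfer => //; first by move=> x; apply: addP_r.
by apply: (findim_transfer sWK sWI sI) finJI => //; [exact: capP_mono | move=> x; apply: addP_r].
Qed.

Lemma qdim_exchange_add Z W K I : subspace Z -> subspace W -> subspace K -> subspace I ->
  (forall x, I x -> K x) -> (forall x, K x -> Z x) -> (forall x, W x -> Z x) ->
  findim Z (addP W I) -> findim K I ->
  (qdim Z (addP W I) + qdim (capP W K) (capP W I) = qdim K I + qdim Z (addP W K))%N.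
Proof.
move=> sZ sW sK sI IK KZ WZ finZWI finKI.
rewrite (qdim_modular sW sK sI IK finKI) (qdim_tower (S := addP W K)) //.
- lia.
- exact: addP_subspace.
- exact: addP_subspace.
- by apply: addP_mono.
- exact: addP_sub.
Qed.

Lemma qdim_exchange_cap W K I I0 : subspace W -> subspace K -> subspace I -> subspace I0 ->
  (forall x, I x -> K x) -> (forall x, I0 x -> capP W I x) ->
  findim (capP W K) I0 -> findim K I ->
  (qdim (capP W K) I0 + qdim (addP W K) (addP W I) = qdim K I + qdim (capP W I) I0)%N.
Proof.
move=> sW sK sI sI0 IK I0WI finWKI0 finKI.
rewrite (qdim_modular sW sK sI IK finKI) (qdim_tower (S := capP W I)) //.
- lia.
- exact: capP_subspace.
- exact: capP_mono.
Qed.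

End QuotientDimension.

Section LinearMaps.
Set Implicit Arguments.
Unset Strict Implicit.
Local Open Scope ring_scope.
Variables (R : fieldType) (U W : lmodType R) (f : {linear U -> W}).

Lemma subspace_ker : subspace (fun x => f x = 0).
Proof. by split=> [|a x y fx0 fy0]; rewrite ?linear0 // linearP fx0 fy0 scaler0 addr0. Qed.

Lemma subspace_im : subspace (fun y => exists x, f x = y).
Proof.
split=> [|a _ _ [x <-] [y <-]]; first by exists 0; rewrite linear0.
by exists (a *: x + y); rewrite linearP.
Qed.

End LinearMaps.

Section DoubleComplex.
Set Implicit Arguments.
Unset Strict Implicit.
Local Open Scope ring_scope.
Variables (R : fieldType) (n : nat) (C : dcomplex R n).

Lemma kerD_subspace p q : subspace (kerD C p q).
Proof. exact: subspace_ker. Qed.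

Lemma kerDb_subspace p q : subspace (kerDb C p q).
Proof. exact: subspace_ker. Qed.

Lemma kerDDb_subspace p q : subspace (kerDDb C p q).
Proof. exact: (subspace_ker (del C p q.+1 \o dbar C p q)). Qed.

Lemma imD_subspace p q : subspace (imD C p q).
Proof. by case: p => [|p]; [exact: subspace_zero | exact: subspace_im]. Qed.

Lemma imDb_subspace p q : subspace (imDb C p q).
Proof. by case: q => [|q]; [exact: subspace_zero | exact: subspace_im]. Qed.

Lemma imDDb_subspace p q : subspace (imDDb C p q).
Proof.
case: p q => [|p] [|q]; try exact: subspace_zero.
exact: (subspace_im (del C p q.+1 \o dbar C p q)).
Qed.

#[local] Hint Resolve kerD_subspace kerDb_subspace kerDDb_subspace : core.
#[local] Hint Resolve imD_subspace imDb_subspace imDDb_subspace : core.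
#[local] Hint Resolve capP_subspace addP_subspace : core.

Lemma imD_kerD p q x : imD C p q x -> kerD C p q x.
Proof. by case: p x => [|p] x /= => [-> | [y <-]]; rewrite /kerD ?linear0 ?del_del. Qed.

Lemma imDb_kerDb p q x : imDb C p q x -> kerDb C p q x.
Proof. by case: q x => [|q] x /= => [-> | [y <-]]; rewrite /kerDb ?linear0 ?dbar_dbar. Qed.

Lemma kerD_kerDDb p q x : kerD C p q x -> kerDDb C p q x.
Proof. by rewrite /kerDDb del_dbar => ->; rewrite linear0 oppr0. Qed.

Lemma kerDb_kerDDb p q x : kerDb C p q x -> kerDDb C p q x.
Proof. by rewrite /kerDDb => ->; rewrite linear0. Qed.

Lemma imDDb_imD p q x : imDDb C p q x -> imD C p q x.
Proof.
case: p q x => [|p] [|q] x //=; first by move->; exists 0; rewrite linear0.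
by case=> y <-; exists (dbar C p q y).
Qed.

Lemma imDDb_imDb p q x : imDDb C p q x -> imDb C p q x.
Proof.
case: p q x => [|p] [|q] x //=; first by move->; exists 0; rewrite linear0.
by case=> y <-; exists (- del C p q y); rewrite linearN del_dbar.
Qed.

Lemma imDDb_capP p q x : imDDb C p q x -> capP (imD C p q) (imDb C p q) x.
Proof. by move=> Ix; split; [exact: imDDb_imD | exact: imDDb_imDb]. Qed.

Lemma kerDb_top p x : kerDb C p n x.
Proof. exact: form_bounded (or_intror (ltnSn n)). Qed.

Lemma kerD_top q x : kerD C n q x.
Proof. exact: form_bounded (or_introl (ltnSn n)). Qed.

#[local] Hint Resolve imD_kerD imDb_kerDb kerD_kerDDb kerDb_kerDDb imDDb_imD imDDb_imDb : core.

Section Bidegree.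
Variables p q : nat.
Local Notation kD := (kerD C p q).
Local Notation kDb := (kerDb C p q).
Local Notation kDDb := (kerDDb C p q).
Local Notation iD := (imD C p q).
Local Notation iDb := (imDb C p q).
Local Notation iDDb := (imDDb C p q).
Hypothesis Cfin : all_finite C.

Lemma findim_cohomology : [/\ findim kDb iDb, findim kD iD,
  findim (capP kD kDb) iDDb & findim kDDb (addP iD iDb)].
Proof. by have [? [? [? [? _]]]] := Cfin p q. Qed.

Lemma addP_kerD_kerDb_kerDDb x : addP kD kDb x -> kDDb x.
Proof. exact: addP_sub (kerDDb_subspace p q) (@kerD_kerDDb p q) (@kerDb_kerDDb p q) x. Qed.

Lemma imDDb_imD_kerDb x : iDDb x -> capP iD kDb x.
Proof. by move/imDDb_capP; apply: capP_mono => // y /imDb_kerDb. Qed.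

Lemma imDDb_kerD_imDb x : iDDb x -> capP kD iDb x.
Proof. by move/imDDb_capP; apply: capP_mono => // y /imD_kerD. Qed.

Lemma capP_imD_kerDb_sub x : capP iD kDb x -> capP kD kDb x.
Proof. by apply: capP_mono => // y /imD_kerD. Qed.

Lemma capP_kerD_imDb_sub x : capP kD iDb x -> capP kD kDb x.
Proof. by apply: capP_mono => // y /imDb_kerDb. Qed.

Lemma addP_imD_kerDb_sub x : addP iD kDb x -> addP kD kDb x.
Proof. by apply: addP_mono => // y /imD_kerD. Qed.

Lemma addP_kerD_imDb_sub x : addP kD iDb x -> addP kD kDb x.
Proof. by apply: addP_mono => // y /imDb_kerDb. Qed.

Lemma findim_B : findim (capP iD kDb) iDDb.
Proof.
have [_ _ finBC _] := findim_cohomology.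
by apply: (findim_tower _ _ imDDb_imD_kerDb capP_imD_kerDb_sub finBC).2; auto.
Qed.

Lemma findim_D : findim (capP kD iDb) iDDb.
Proof.
have [_ _ finBC _] := findim_cohomology.
by apply: (findim_tower _ _ imDDb_kerD_imDb capP_kerD_imDb_sub finBC).2; auto.
Qed.

Lemma findim_C : findim kDDb (addP iD kDb).
Proof.
have [_ _ _ finA] := findim_cohomology.
apply: (findim_tower _ _ _ _ finA).1; auto.
- by apply: addP_mono => // y /imDb_kerDb.
- by move=> x /addP_imD_kerDb_sub /addP_kerD_kerDb_kerDDb.
Qed.

Lemma findim_E : findim kDDb (addP kD iDb).
Proof.
have [_ _ _ finA] := findim_cohomology.
apply: (findim_tower _ _ _ _ finA).1; auto.
- by apply: addP_mono => // y /imD_kerD.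
- by move=> x /addP_kerD_imDb_sub /addP_kerD_kerDb_kerDDb.
Qed.

Lemma dim_split_tilde :
  [/\ dim_b C p q = (dim_bt C p q + dim_a C p q)%N,
      dim_d C p q = (dim_dt C p q + dim_a C p q)%N,
      dim_c C p q = (dim_ct C p q + dim_f C p q)%N &
      dim_e C p q = (dim_et C p q + dim_f C p q)%N].
Proof.
rewrite /dim_a /dim_b /dim_c /dim_d /dim_e /dim_f /dim_bt /dim_dt /dim_ct /dim_et /sdim /=.
have finB := findim_B; have finD := findim_D; have finC := findim_C; have finE := findim_E.
split.
- apply: (qdim_tower (S := capP iD iDb)); auto; first exact: imDDb_capP.
  by apply: capP_mono => // y /imDb_kerDb.
- apply: (qdim_tower (S := capP iD iDb)); auto; first exact: imDDb_capP.
  by apply: capP_mono => // y /imD_kerD.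
- rewrite addnC; apply: (qdim_tower (S := addP kD kDb)); auto.
  + exact: addP_imD_kerDb_sub.
  + exact: addP_kerD_kerDb_kerDDb.
- rewrite addnC; apply: (qdim_tower (S := addP kD kDb)); auto.
  + exact: addP_kerD_imDb_sub.
  + exact: addP_kerD_kerDb_kerDDb.
Qed.

Lemma dim_le_cohomology :
  [/\ (dim_b C p q <= h_BC C p q)%N, (dim_d C p q <= h_BC C p q)%N,
      (dim_c C p q <= h_A C p q)%N & (dim_e C p q <= h_A C p q)%N].
Proof.
have [_ _ finBC finA] := findim_cohomology.
rewrite /dim_b /dim_c /dim_d /dim_e /h_BC /h_A /sdim /=.
split.
- by apply: leq_qdim_sub; auto; [exact: imDDb_imD_kerDb | exact: capP_imD_kerDb_sub].
- by apply: leq_qdim_sub; auto; [exact: imDDb_kerD_imDb | exact: capP_kerD_imDb_sub].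
- apply: leq_qdim_quo; auto.
  + by apply: addP_mono => // y /imDb_kerDb.
  + by move=> x /addP_imD_kerDb_sub /addP_kerD_kerDb_kerDDb.
- apply: leq_qdim_quo; auto.
  + by apply: addP_mono => // y /imD_kerD.
  + by move=> x /addP_kerD_imDb_sub /addP_kerD_kerDb_kerDDb.
Qed.

Lemma cohomology_exchange :
  [/\ (h_A C p q + dim_bt C p q = h_dbar C p q + dim_c C p q)%N,
      (h_A C p q + dim_dt C p q = h_del C p q + dim_e C p q)%N,
      (h_BC C p q + dim_et C p q = h_dbar C p q + dim_d C p q)%N &
      (h_BC C p q + dim_ct C p q = h_del C p q + dim_b C p q)%N].
Proof.
have [finHdb finHd finBC finA] := findim_cohomology.
rewrite /h_A /h_BC /h_dbar /h_del /dim_b /dim_c /dim_d /dim_e /dim_bt /dim_dt /dim_ct /dim_et.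
rewrite /sdim /=; split.
- by apply: qdim_exchange_add; auto.
- rewrite (addPC iD iDb) (capPC kD iDb) (capPC iD iDb) (addPC kD iDb).
  by apply: qdim_exchange_add; auto; rewrite addPC.
- by apply: qdim_exchange_cap; auto; exact: imDDb_kerD_imDb.
- rewrite (capPC kD kDb) (addPC kD kDb) (addPC iD kDb) (capPC iD kDb).
  by apply: qdim_exchange_cap; auto; rewrite capPC //; exact: imDDb_imD_kerDb.
Qed.

End Bidegree.

Lemma dim_b_bottom q : dim_b C 0 q = 0%N.
Proof. by apply: qdim_eq0 => // [x /imDDb_imD_kerDb // | x [/= -> _]]. Qed.

Lemma dim_d_bottom p : dim_d C p 0 = 0%N.
Proof. by apply: qdim_eq0 => // [x /imDDb_kerD_imDb // | x [_ /= ->]]; exact: subspace0. Qed.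

Lemma dim_c_top p : dim_c C p n = 0%N.
Proof.
rewrite /dim_c /sdim /=; apply: qdim_eq0; first by auto.
  by move=> x /addP_imD_kerDb_sub /addP_kerD_kerDb_kerDDb.
by move=> x _; apply: addP_r; [exact: imD_subspace | exact: kerDb_top].
Qed.

Lemma dim_e_top q : dim_e C n q = 0%N.
Proof.
rewrite /dim_e /sdim /=; apply: qdim_eq0; first by auto.
  by move=> x /addP_kerD_imDb_sub /addP_kerD_kerDb_kerDDb.
by move=> x _; apply: addP_l; [exact: imDb_subspace | exact: kerD_top].
Qed.

Hypothesis Cfin : all_finite C.

Lemma h_A_add_h_BC p q : (h_A C p q + h_BC C p q
  = h_del C p q + h_dbar C p q + dim_a C p q + dim_f C p q)%N.
Proof.
have [splitb _ splitc _] := dim_split_tilde p q Cfin.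
have [exA _ _ exBC] := cohomology_exchange p q Cfin.
lia.
Qed.

Lemma cohomology_le_bottom p q :
  [/\ (h_dbar C 0 q <= h_A C 0 q)%N, (h_BC C 0 q <= h_del C 0 q)%N,
      (h_BC C p 0 <= h_dbar C p 0)%N & (h_del C p 0 <= h_A C p 0)%N].
Proof.
have [splitb _ _ _] := dim_split_tilde 0 q Cfin.
have [_ splitd _ _] := dim_split_tilde p 0 Cfin.
have [exA _ _ exBC] := cohomology_exchange 0 q Cfin.
have [_ exA' exBC' _] := cohomology_exchange p 0 Cfin.
have b0 := dim_b_bottom q; have d0 := dim_d_bottom p.
by split; lia.
Qed.

Lemma cohomology_le_top p q :
  [/\ (h_del C p n <= h_BC C p n)%N, (h_A C p n <= h_dbar C p n)%N,
      (h_dbar C n q <= h_BC C n q)%N & (h_A C n q <= h_del C n q)%N].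
Proof.
have [_ _ splitc _] := dim_split_tilde p n Cfin.
have [_ _ _ splite] := dim_split_tilde n q Cfin.
have [exA _ _ exBC] := cohomology_exchange p n Cfin.
have [_ exA' exBC' _] := cohomology_exchange n q Cfin.
have c0 := dim_c_top p; have e0 := dim_e_top q.
by split; lia.
Qed.

End DoubleComplex.

Theorem lemma2p4 (R : fieldType) (n : nat) (C : dcomplex R n) :
  all_finite C ->
  forall p q : nat, p <= n -> q <= n ->
  [/\ dim_b C p q = dim_bt C p q + dim_a C p q,
      dim_d C p q = dim_dt C p q + dim_a C p q,
      dim_c C p q = dim_ct C p q + dim_f C p q &
      dim_e C p q = dim_et C p q + dim_f C p q] /\
  [/\ dim_b C p q <= h_BC C p q, dim_d C p q <= h_BC C p q,
      dim_c C p q <= h_A C p q & dim_e C p q <= h_A C p q] /\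
  [/\ h_A C p q + dim_bt C p q = h_dbar C p q + dim_c C p q,
      h_A C p q + dim_dt C p q = h_del C p q + dim_e C p q,
      h_BC C p q + dim_et C p q = h_dbar C p q + dim_d C p q &
      h_BC C p q + dim_ct C p q = h_del C p q + dim_b C p q] /\
  h_A C p q + h_BC C p q
    = h_del C p q + h_dbar C p q + dim_a C p q + dim_f C p q /\
  [/\ h_dbar C 0 q <= h_A C 0 q, h_BC C 0 q <= h_del C 0 q,
      h_BC C p 0 <= h_dbar C p 0 & h_del C p 0 <= h_A C p 0] /\
  [/\ h_del C p n <= h_BC C p n, h_A C p n <= h_dbar C p n,
      h_dbar C n q <= h_BC C n q & h_A C n q <= h_del C n q].
Proof.
move=> Cfin p q _ _.
split; first exact: dim_split_tilde.
split; first exact: dim_le_cohomology.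
split; first exact: cohomology_exchange.
split; first exact: h_A_add_h_BC.
by split; [exact: cohomology_le_bottom | exact: cohomology_le_top].
Qed.
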